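(* For every integer $k\ge2$ and every item sequence $I\in(0,1]^n$, $NFD_k(I)\le\lambda_k\cdot OPT_k(I)+k$.
   Context: Define $\pi_1=2$, $\pi_{i+1}=\pi_i(\pi_i-1)+1$ for $i\ge1$, and $\lambda_j=\sum_{i=1}^j\max\{\frac{1}{\pi_i-1},\frac1j\}$ for $j\ge1$. The $k$-cardinality constrained bin packing problem: an item sequence $I\in(0,1]^n$ must be packed into bins of capacity $1$ with at most $k$ items per bin; $OPT_k(I)$ is the minimum number of non-empty bins, $ALG(I)$ the number used by $ALG$. Algorithm $NFD_k$: sort the items in non-increasing order, then process them in this order with a single open bin: pack the current item into the open bin if it fits (load stays $\le1$) and the bin contains fewer than $k$ items; otherwise close the open bin permanently and pack the item into a new bin. *)

From HB Require Import structures.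
From mathcomp Require Import all_boot all_order all_algebra.
From mathcomp Require Import reals.
Set Implicit Arguments. Unset Strict Implicit. Unset Printing Implicit Defensive.
Import Order.TTheory GRing.Theory Num.Theory.
Local Open Scope ring_scope.

(* Sylvester sequence: sylv i = pi_{i+1}; pi_1 = 2, pi_{i+1} = pi_i (pi_i - 1) + 1 *)
Fixpoint sylv (i : nat) : nat :=
  match i with
  | 0 => 2
  | i'.+1 => (sylv i' * (sylv i' - 1) + 1)%N
  end.

Definition piS (i : nat) : nat := sylv i.-1.

Definition lambda (R : realFieldType) (j : nat) : R :=
  \sum_(1 <= i < j.+1) Num.max (1 / ((piS i - 1)%:R)) (1 / j%:R).

(* Next Fit with one open bin of current load [load] containing [cnt] items;
   returns the number of additional bins opened while processing [s]. *)
Fixpoint nf_aux (R : realFieldType) (k : nat) (load : R) (cnt : nat) (s : seq R)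
  : nat :=
  match s with
  | [::] => 0%N
  | x :: s' =>
      if (load + x <= 1) && (cnt < k)%N
      then nf_aux k (load + x) cnt.+1 s'
      else (nf_aux k x 1 s').+1
  end.

Definition NF (R : realFieldType) (k : nat) (s : seq R) : nat :=
  match s with
  | [::] => 0%N
  | x :: s' => (nf_aux k x 1 s').+1
  end.

Definition NFD (R : realFieldType) (k : nat) (I : seq R) : nat :=
  NF k (sort (fun x y : R => y <= x) I).

(* A packing of the items of I: item i goes to bin f i; there are at most
   size I non-empty bins, so bins are indexed by 'I_(size I) w.l.o.g. *)
Definition feasible (R : realFieldType) (k : nat) (I : seq R)
  (f : {ffun 'I_(size I) -> 'I_(size I)}) : bool :=
  [forall b : 'I_(size I),
     (\sum_(i : 'I_(size I) | f i == b) nth 0 I i <= 1)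
     && (#|[set i : 'I_(size I) | f i == b]| <= k)%N].

Definition nbins (n : nat) (f : {ffun 'I_n -> 'I_n}) : nat :=
  #|[set f i | i : 'I_n]|.

(* OPT_k(I): minimum number of non-empty bins over all feasible packings
   (the default value size I is attained by the trivial packing when k >= 1). *)
Definition OPT (R : realFieldType) (k : nat) (I : seq R) : nat :=
  \big[minn/size I]_(f : {ffun 'I_(size I) -> 'I_(size I)} | @feasible R k I f)
     nbins f.

From HB Require Import structures.
From mathcomp Require Import all_boot all_order all_algebra.
From mathcomp Require Import ring lra zify.
From mathcomp Require Import reals.

Set Implicit Arguments. Unset Strict Implicit. Unset Printing Implicit Defensive.
Import Order.TTheory GRing.Theory Num.Theory.
Local Open Scope ring_scope.

(* Give each item x the weight 1/nfit(x), where nfit(x) = min(k, floor(1/x)) is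
   the number of copies of x that fit in one bin.

   A feasible bin weighs at most lambda_k.  Its items with nfit(x) < k satisfy
   x > 1/(nfit(x) + 1), so the integers a = nfit(x) + 1 have sum 1/a < 1, and
   the Sylvester bound gives sum 1/(a - 1) <= sum_{i <= n} 1/(pi_i - 1); every
   other item weighs 1/k.  Hence the total weight is at most lambda_k OPT_k.

   NFD uses at most total weight + k bins.  Since the items are non-increasing,
   if NFD closes a bin with c items and first item Y and opens the next one
   with z, then nfit(Y) <= c <= nfit(z), and the closed bin weighs at least
   c/nfit(z); so 1 + nfit(Y) <= weight + nfit(z), which telescopes. *)

Lemma sylv_ge2 i : (2 <= sylv i)%N.
Proof. by elim: i => //= i IH; nia. Qed.

Lemma ler_sum_mem (R : numDomainType) (I : eqType) (s : seq I) (F : I -> R) x :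
  (forall y, y \in s -> 0 <= F y) -> x \in s -> F x <= \sum_(y <- s) F y.
Proof.
move=> F_ge0 x_in; rewrite (perm_big _ (perm_to_rem x_in)) big_cons lerDl.
by rewrite big_seq sumr_ge0 // => y /mem_rem /F_ge0.
Qed.

Section Sylvester.
Variable R : realFieldType.

Local Notation sylvR i := ((sylv i)%:R : R).

(* [sylv i] is pi_(i+1), so [sylv_gap i] is the (i+1)-st term 1/(pi_(i+1) - 1)
   of lambda; it is also 1 - sum_(j < i) 1/pi_(j+1). *)
Definition sylv_gap (i : nat) : R := (sylvR i - 1)^-1.

Lemma sylvR_ge2 i : 2 <= sylvR i.
Proof. by rewrite (ler_nat R 2) sylv_ge2. Qed.

Lemma sylv_gap_ge0 i : 0 <= sylv_gap i.
Proof. by rewrite invr_ge0; have := sylvR_ge2 i; lra. Qed.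

Lemma sylv_gap0 : sylv_gap 0 = 1.
Proof. by rewrite /sylv_gap /= -natr1 addrK invr1. Qed.

Lemma sylvR_succ i : sylvR i.+1 - 1 = sylvR i * (sylvR i - 1).
Proof. by rewrite /= natrD natrM natrB ?addrK //; have := sylv_ge2 i; lia. Qed.

Lemma sylv_gapS i : sylv_gap i.+1 = sylv_gap i - (sylvR i)^-1.
Proof.
have := sylvR_ge2 i; rewrite /sylv_gap sylvR_succ => s_ge2.
by field; rewrite !subr_eq0; apply/andP; split; apply/eqP; lra.
Qed.

Lemma sylv_gap_addS i : (sylvR i + 1) / sylvR i * sylv_gap i = sylv_gap i + sylv_gap i.+1.
Proof.
have := sylvR_ge2 i; rewrite sylv_gapS /sylv_gap => s_ge2.
by field; rewrite !subr_eq0; apply/andP; split; apply/eqP; lra.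
Qed.

Lemma inv_pred_le (A x : R) : 2 <= A -> A <= x -> (x - 1)^-1 <= A / (A - 1) * x^-1.
Proof.
move=> A_ge2 A_le_x.
rewrite -mulrA -invfM ler_pdivlMr ?mulr_gt0 ?subr_gt0; try lra.
by rewrite mulrC ler_pdivrMr ?subr_gt0; nra.
Qed.

Lemma sylvester_bound_gt t (a : seq nat) :
  all (fun x => sylv t < x)%N a -> \sum_(x <- a) (x%:R : R)^-1 < sylv_gap t ->
  \sum_(x <- a) (x%:R - 1)^-1 <= \sum_(t <= i < t + size a) sylv_gap i.
Proof.
have s_ge2 := sylvR_ge2 t.
case: a => [|x1 [|x2 a]] a_gt a_lt.
- by rewrite !big_nil addn0 big_geq.
- have x1_gt : sylvR t + 1 <= x1%:R by rewrite natr1 ler_nat; move: a_gt => /andP[].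
  by rewrite big_seq1 addn1 big_nat1 lef_pV2 ?posrE; lra.
set A := sylvR t + 1; have A_ge2 : 2 <= A by rewrite /A; lra.
apply: (@le_trans _ _ (A / (A - 1) * sylv_gap t)).
  apply: (@le_trans _ _ (\sum_(x <- [:: x1, x2 & a]) A / (A - 1) * x%:R^-1)).
    rewrite !big_seq; apply: ler_sum => x x_in; apply: inv_pred_le => //.
    by rewrite /A natr1 ler_nat; apply: (allP a_gt).
  by rewrite -mulr_sumr ler_wpM2l ?ltW // divr_gt0 //; lra.
have -> : A / (A - 1) * sylv_gap t = sylv_gap t + sylv_gap t.+1.
  rewrite /A addrK; exact: sylv_gap_addS.
rewrite big_ltn; last by rewrite addnS ltnS leq_addr.
rewrite big_ltn; last by rewrite /= !addnS !ltnS leq_addr.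
rewrite addrA lerDl.
by apply: sumr_ge0 => i _; apply: sylv_gap_ge0.
Qed.

Lemma sylvester_bound t (a : seq nat) :
  all (leq 2) a -> \sum_(x <- a) (x%:R : R)^-1 < sylv_gap t ->
  \sum_(x <- a) (x%:R - 1)^-1 <= \sum_(t <= i < t + size a) sylv_gap i.
Proof.
have [n] := ubnP (size a); elim: n a t => // n IH a t a_size a_ge2 a_lt.
(* Either pi_(t+1) occurs in [a] and is peeled off, or all of [a] exceeds it. *)
case: (boolP (sylv t \in a)) => [st_in | st_notin].
  have a_perm := perm_to_rem st_in.
  rewrite (perm_size a_perm) ltnS in a_size.
  rewrite (perm_big _ a_perm) big_cons /= in a_lt.
  rewrite (perm_big _ a_perm) big_cons (perm_size a_perm) /= -addSnnS big_ltn ?lerD2l; last lia.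
  apply: IH => //.
  - by apply/allP => x /mem_rem /(allP a_ge2).
  - by rewrite sylv_gapS; lra.
suff a_gt : all (fun x => sylv t < x)%N a by exact: sylvester_bound_gt.
apply/allP => x x_in.
have x_gt0 : 0 < x%:R :> R by rewrite ltr0n; apply: leq_trans (allP a_ge2 x x_in).
have x_inv_lt : x%:R^-1 < sylv_gap t.
  by apply: le_lt_trans a_lt; apply: ler_sum_mem x_in => y _; rewrite invr_ge0.
have : sylvR t - 1 < x%:R.
  by move: x_inv_lt; rewrite /sylv_gap ltf_pV2 ?posrE // subr_gt0; have := sylvR_ge2 t; lra.
rewrite ltrBlDr natr1 ltr_nat ltnS leq_eqVlt => /orP[/eqP st_eq | //].
by move: st_notin; rewrite st_eq x_in.
Qed.

End Sylvester.

Section Weight.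
Variables (R : realFieldType) (k : nat).
Hypothesis k_gt0 : (0 < k)%N.

Definition nfit (x : R) : nat := \max_(c < k.+1 | c%:R * x <= 1) c.

Definition weight (x : R) : R := (nfit x)%:R^-1.

Lemma nfit_le_k x : (nfit x <= k)%N.
Proof. by apply/bigmax_leqP => c _; rewrite -ltnS. Qed.

Lemma nfit_mul_le1 x : (nfit x)%:R * x <= 1.
Proof.
apply: (big_ind (fun c : nat => c%:R * x <= 1)) => //; first by rewrite mul0r.
by move=> a b; rewrite /maxn; case: ifP.
Qed.

Lemma leq_nfit c x : (c <= k)%N -> c%:R * x <= 1 -> (c <= nfit x)%N.
Proof.
by move=> c_le_k cx_le1; exact: (@leq_bigmax_cond _ _ val (Ordinal (c_le_k : c < k.+1)%N)).
Qed.

Lemma nfit_gt0 x : x <= 1 -> (0 < nfit x)%N.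
Proof. by move=> x_le1; apply: leq_nfit; rewrite ?mul1r. Qed.

Lemma nfit_le c x : 1 < c.+1%:R * x -> (nfit x <= c)%N.
Proof.
move=> cx_gt1; rewrite leqNgt; apply/negP => c_lt.
have x_gt0 : 0 < x by rewrite -(pmulr_rgt0 _ (ltr0Sn _ c)) (lt_trans ltr01).
have := nfit_mul_le1 x; have : c.+1%:R * x <= (nfit x)%:R * x by rewrite ler_pM2r // ler_nat.
lra.
Qed.

Lemma nfit_lt_k x : (nfit x < k)%N -> 1 < (nfit x).+1%:R * x.
Proof. by move=> nfit_lt; rewrite ltNge; apply/negP => /(leq_nfit nfit_lt); rewrite ltnn. Qed.

Lemma nfit_antitone x x' : x <= x' -> (nfit x' <= nfit x)%N.
Proof.
move=> x_le; apply: leq_nfit; first exact: nfit_le_k.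
by apply: le_trans (nfit_mul_le1 x'); rewrite ler_wpM2l.
Qed.

Lemma weight_gt0 x : x <= 1 -> 0 < weight x.
Proof. by move=> x_le1; rewrite invr_gt0 ltr0n nfit_gt0. Qed.

Lemma weight_le1 x : x <= 1 -> weight x <= 1.
Proof. by move=> x_le1; rewrite invf_le1 ?ltr0n ?nfit_gt0 // ler1n nfit_gt0. Qed.

Lemma weight_le x x' : x <= x' -> x' <= 1 -> weight x <= weight x'.
Proof.
move=> x_le x'_le1; have x_le1 : x <= 1 by apply: le_trans x'_le1.
by rewrite lef_pV2 ?posrE ?ltr0n ?nfit_gt0 // ler_nat nfit_antitone.
Qed.

Lemma lambdaE : lambda R k = \sum_(0 <= i < k) Num.max (sylv_gap R i) k%:R^-1.
Proof.
rewrite /lambda big_add1 /=; apply: eq_bigr => i _.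
by rewrite /piS /sylv_gap /= !div1r natrB //; have := sylv_ge2 i; lia.
Qed.

Lemma lambda_ge1 : 1 <= lambda R k.
Proof.
rewrite lambdaE big_ltn // sylv_gap0 -[X in X <= _]addr0 lerD ?le_max ?lexx //.
by apply: sumr_ge0 => i _; rewrite le_max sylv_gap_ge0.
Qed.

Lemma lambda_ge_split n1 n2 : (n1 + n2 <= k)%N ->
  \sum_(0 <= i < n1) sylv_gap R i + k%:R^-1 *+ n2 <= lambda R k.
Proof.
move=> n12_le_k; rewrite lambdaE (big_cat_nat (leq0n n1) (leq_trans (leq_addr n2 n1) n12_le_k)).
rewrite lerD ?ler_sum // => [i _|]; first by rewrite le_max lexx.
rewrite (big_cat_nat (leq_addr n2 n1) n12_le_k) /= -[_ *+ n2]addr0 lerD //.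
  by rewrite -{1}(addKn n1 n2) -sumr_const_nat ler_sum // => i _; rewrite le_max lexx orbT.
by apply: sumr_ge0 => i _; rewrite le_max sylv_gap_ge0.
Qed.

Lemma sum_weight_large (t : seq R) :
  all (fun x => 0 < x <= 1) t -> \sum_(x <- t) x <= 1 ->
  \sum_(x <- t | (nfit x < k)%N) weight x
    <= \sum_(0 <= i < count (fun x => nfit x < k)%N t) sylv_gap R i.
Proof.
move=> t_range t_sum.
have t_gt0 x : x \in t -> 0 < x by move/(allP t_range)/andP=> [].
have t_le1 x : x \in t -> x <= 1 by move/(allP t_range)/andP=> [].
set a := [seq (nfit x).+1 | x <- t & (nfit x < k)%N].
have -> : \sum_(x <- t | (nfit x < k)%N) weight x = \sum_(n <- a) (n%:R - 1)^-1.
  by rewrite big_map big_filter; apply: eq_bigr => x _; rewrite /weight -natr1 addrK.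
rewrite -size_filter -(size_map (fun x => (nfit x).+1)) -[0%N in X in _ <= X]add0n.
apply: sylvester_bound.
  by apply/allP => n /mapP [x]; rewrite mem_filter => /andP[_ /t_le1 x_le1] ->; rewrite ltnS nfit_gt0.
rewrite sylv_gap0 big_map big_filter.
have [has_large | no_large] := boolP (has (fun x => nfit x < k)%N t); last by rewrite big_hasC.
apply: (@lt_le_trans _ _ (\sum_(x <- t | (nfit x < k)%N) x)); last apply: le_trans t_sum.
  apply: (@ltr_sum _ _ _ _ _ id has_large) => x /nfit_lt_k nfit_x_gt1.
  by rewrite -div1r ltr_pdivrMr ?ltr0Sn // mulrC.
rewrite [X in _ <= X](bigID (fun x => nfit x < k)%N) lerDl big_seq_cond.
by apply: sumr_ge0 => x /andP[/t_gt0 /ltW].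
Qed.

Lemma sum_weight_bin (t : seq R) :
  all (fun x => 0 < x <= 1) t -> (size t <= k)%N -> \sum_(x <- t) x <= 1 ->
  \sum_(x <- t) weight x <= lambda R k.
Proof.
move=> t_range t_size t_sum.
have small_weight : \sum_(x <- t | ~~ (nfit x < k)%N) weight x
    = k%:R^-1 *+ count (predC (fun x => nfit x < k)%N) t.
  rewrite -iter_addr_0 -big_const_seq; apply: eq_bigr => x.
  by rewrite -leqNgt => k_le; rewrite /weight (@anti_leq (nfit x) k) ?k_le ?nfit_le_k.
rewrite (bigID (fun x => nfit x < k)%N) /= small_weight.
have count_le_k : (count (fun x => nfit x < k)%N t
                   + count (predC (fun x => nfit x < k)%N) t <= k)%N.
  by rewrite count_predC.
apply: le_trans (lambda_ge_split count_le_k).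
by rewrite lerD2r sum_weight_large.
Qed.

Lemma sum_weight_le_nbins (I : seq R) (f : {ffun 'I_(size I) -> 'I_(size I)}) :
  all (fun x => 0 < x <= 1) I -> @feasible R k I f ->
  \sum_(x <- I) weight x <= lambda R k * (nbins f)%:R.
Proof.
move=> I_range /forallP f_feasible.
rewrite (big_nth 0) big_mkord (partition_big f (mem [set f i | i : 'I_(size I)])) /=; last first.
  by move=> i _; apply: imset_f.
rewrite /nbins mulr_natr -sumr_const ler_sum // => b _.
move/andP: (f_feasible b) => [bin_sum bin_card].
pose t := [seq nth 0 I i | i : 'I_(size I) <- enum [pred i | f i == b]].
have bin_sum_eq (F : R -> R) : \sum_(i | f i == b) F (nth 0 I i) = \sum_(x <- t) F x.
  by rewrite big_map big_enum; apply: eq_bigl => i; rewrite inE.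
rewrite bin_sum_eq sum_weight_bin //.
- by apply/allP => _ /mapP [i _ ->]; apply: (allP I_range); apply: mem_nth.
- by rewrite size_map -cardE -cardsE.
- by rewrite -(bin_sum_eq id).
Qed.

Lemma sum_weight_le_OPT (I : seq R) :
  all (fun x => 0 < x <= 1) I -> \sum_(x <- I) weight x <= lambda R k * (OPT k I)%:R.
Proof.
move=> I_range; rewrite /OPT.
apply: (big_ind (fun n => \sum_(x <- I) weight x <= lambda R k * n%:R)).
- apply: (@le_trans _ _ (size I)%:R).
    rewrite -sum1_size natr_sum big_seq [X in _ <= X]big_seq ler_sum // => x.
    by move/(allP I_range)/andP=> [_ /weight_le1].
  by rewrite ler_peMl ?lambda_ge1.
- by move=> m n Pm Pn; rewrite /minn; case: ifP.
- by move=> f; apply: sum_weight_le_nbins.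
Qed.

Lemma next_bin_credit c z w : (c <= k)%N -> z <= 1 -> c%:R * z <= 1 ->
  c%:R * weight z <= w -> 1 + c%:R <= w + (nfit z)%:R.
Proof.
move=> c_le_k z_le1 cz_le1 cw_le.
(* With n = nfit z: (n - c) (1 - 1/n) >= 0. *)
have : c%:R <= (nfit z)%:R :> R by rewrite ler_nat leq_nfit.
have : (nfit z)%:R * weight z = 1 by rewrite /weight mulfV // pnatr_eq0 -lt0n nfit_gt0.
have := weight_le1 z_le1.
nra.
Qed.

(* The open bin holds [c] items of total size [L], the first one [Y] and the
   last one [y]; [w] is its weight. *)
Lemma nf_aux_le (L : R) c (s : seq R) (y Y w : R) :
  path (fun a b : R => b <= a) y s -> (0 < c <= k)%N ->
  c%:R * y <= L -> L <= 1 -> L <= c%:R * Y -> c%:R * weight y <= w ->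
  (nf_aux k L c s)%:R + (nfit Y)%:R <= \sum_(x <- s) weight x + w + k%:R.
Proof.
elim: s L c y Y w => [|z s IH] L c y Y w /= s_path /andP[c_gt0 c_le_k] cy_le L_le1 L_le_cY cw_le.
all: have c_ge1 : 1 <= c%:R :> R by rewrite ler1n.
all: have y_le1 : y <= 1 by nra.
  have w_ge0 : 0 <= w by apply: le_trans cw_le; apply: mulr_ge0 => //; exact/ltW/weight_gt0.
  have : (nfit Y)%:R <= k%:R :> R by rewrite ler_nat nfit_le_k.
  by rewrite big_nil; lra.
move: s_path => /andP[z_le_y s_path].
have z_le1 : z <= 1 by apply: le_trans y_le1.
have y_le_Y : y <= Y by nra.
have cz_le : c%:R * z <= c%:R * y by rewrite ler_wpM2l.
have cwz_le : c%:R * weight z <= c%:R * weight y by rewrite ler_wpM2l ?weight_le.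
rewrite big_cons; case: ifP => [/andP[fits c_lt_k] | no_fit].
  have := IH (L + z) c.+1 z Y (w + weight z) s_path; rewrite c_lt_k -natr1 !mulrDl !mul1r.
  by move=> /(_ isT) /(_ ltac:(lra) fits ltac:(lra) ltac:(lra)); lra.
have nfit_Y_le : (nfit Y <= c)%N.
  have [c_lt_k | k_le_c] := ltnP c k; last exact: leq_trans (nfit_le_k Y) k_le_c.
  apply: nfit_le; move: no_fit; rewrite c_lt_k andbT => /negbT; rewrite -ltNge -natr1 mulrDl mul1r.
  lra.
have := IH z 1%N z z (weight z) s_path; rewrite !mul1r.
move=> /(_ k_gt0 (lexx z) z_le1 (lexx z) (lexx _)).
have := next_bin_credit c_le_k z_le1 (le_trans cz_le (le_trans cy_le L_le1)) (le_trans cwz_le cw_le).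
have : (nfit Y)%:R <= c%:R :> R by rewrite ler_nat.
rewrite -natr1; lra.
Qed.

Lemma NFD_le_sum_weight (I : seq R) :
  all (fun x => 0 < x <= 1) I -> (NFD k I)%:R <= \sum_(x <- I) weight x + k%:R.
Proof.
move=> I_range; pose ge := fun x y : R => y <= x.
have ge_total : total ge by move=> x y; rewrite /ge orbC le_total.
have sorted_range : all (fun x => 0 < x <= 1) (sort ge I) by rewrite all_sort.
rewrite -(perm_big _ (permEl (perm_sort ge I))) /NFD -/ge.
move: (sort ge I) (sort_sorted ge_total I) sorted_range => [|x s] /=.
  by rewrite big_nil add0r.
move=> s_path /andP[/andP[_ x_le1] _].
have := nf_aux_le (L := x) (c := 1) (Y := x) (w := weight x) s_path; rewrite !mul1r.
move=> /(_ k_gt0 (lexx x) x_le1 (lexx x) (lexx _)).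
have : 1 <= (nfit x)%:R :> R by rewrite ler1n nfit_gt0.
by rewrite big_cons -natr1; lra.
Qed.

End Weight.

Theorem theorem11 (R : realType) (k : nat) (I : seq R) :
  (2 <= k)%N ->
  all (fun x : R => (0 < x) && (x <= 1)) I ->
  (NFD k I)%:R <= lambda R k * (OPT k I)%:R + k%:R.
Proof.
move=> k_ge2 I_range; have k_gt0 : (0 < k)%N := ltnW k_ge2.
apply: le_trans (NFD_le_sum_weight k_gt0 I_range) _.
by rewrite lerD2r sum_weight_le_OPT.
Qed.
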